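(* Let $R$ be a right $\sigma$-reversible ring, where $\sigma$ is an endomorphism of $R$ with $\sigma(1)=1$. Then (1) $\sigma(e)=e$ for every idempotent $e\in R$; and (2) $R$ is abelian, i.e. every idempotent of $R$ is central.
   Context: All rings are associative with identity; $\sigma$ denotes a nonzero, non-identity ring endomorphism of $R$. $R$ is right $\sigma$-reversible if for all $a,b\in R$, $ab=0$ implies $b\sigma(a)=0$. *)

From HB Require Import structures.
From mathcomp Require Import all_boot all_order all_algebra.
Set Implicit Arguments. Unset Strict Implicit. Unset Printing Implicit Defensive.
Import GRing.Theory.
Local Open Scope ring_scope.

Definition right_sigma_reversible (R : nzRingType) (sigma : R -> R) : Prop :=
  forall a b : R, a * b = 0 -> b * sigma a = 0.

Definition is_idempotent (R : nzRingType) (e : R) : Prop := e * e = e.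

Definition abelian_ring (R : nzRingType) : Prop :=
  forall e : R, is_idempotent e -> forall x : R, e * x = x * e.

From HB Require Import structures.
From mathcomp Require Import all_boot all_order all_algebra.
Import GRing.Theory.
Local Open Scope ring_scope.

(* Right sigma-reversibility turns e(1 - e) = 0 into (1 - e)sigma(e) = 0,
   i.e. sigma(e) = e sigma(e), and (1 - e)e = 0 into e(1 - sigma(e)) = 0,
   i.e. e = e sigma(e); hence sigma(e) = e.  The same two-sided trick applied
   to e((1 - e)x) = 0 and (1 - e)(ex) = 0, now using sigma(e) = e, gives
   (1 - e)xe = 0 and ex(1 - e) = 0, i.e. xe = exe = ex: e is central. *)

Lemma idem_mul_compl {R : nzRingType} {e : R} :
  is_idempotent e -> e * (1 - e) = 0.
Proof. by move=> He; rewrite mulrBr mulr1 He subrr. Qed.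

Lemma compl_mul_idem {R : nzRingType} {e : R} :
  is_idempotent e -> (1 - e) * e = 0.
Proof. by move=> He; rewrite mulrBl mul1r He subrr. Qed.

Section RightSigmaReversible.

Variables (R : nzRingType) (sigma : {rmorphism R -> R}).
Hypothesis Hrev : right_sigma_reversible sigma.

Lemma sigma_idempotent_fixed {e : R} : is_idempotent e -> sigma e = e.
Proof.
move=> He.
have left_abs : (1 - e) * sigma e = 0 := Hrev _ _ (idem_mul_compl He).
have right_abs : e * sigma (1 - e) = 0 := Hrev _ _ (compl_mul_idem He).
move: left_abs right_abs; rewrite rmorphB rmorph1 mulrBl mulrBr mul1r mulr1.
by move=> /subr0_eq sigma_e /subr0_eq e_eq; rewrite sigma_e -e_eq.
Qed.

Lemma idempotent_central (e : R) : is_idempotent e -> forall x : R, e * x = x * e.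
Proof.
move=> He x; have fix_e := sigma_idempotent_fixed He.
have ann1 : e * ((1 - e) * x) = 0 by rewrite mulrA (idem_mul_compl He) mul0r.
have ann2 : (1 - e) * (e * x) = 0 by rewrite mulrA (compl_mul_idem He) mul0r.
have xe_exe : (1 - e) * x * e = 0 by have := Hrev _ _ ann1; rewrite fix_e.
have ex_exe : e * x * (1 - e) = 0.
  by have := Hrev _ _ ann2; rewrite rmorphB rmorph1 fix_e.
move: xe_exe ex_exe; rewrite !mulrBl mulrBr mul1r mulr1.
by move=> /subr0_eq xe_eq /subr0_eq ex_eq; rewrite xe_eq.
Qed.

End RightSigmaReversible.

Theorem lemma3p1 (R : nzRingType) (sigma : {rmorphism R -> R})
  (Hnz : exists x : R, sigma x <> 0)
  (Hnid : exists x : R, sigma x <> x)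
  (Hrev : right_sigma_reversible sigma) :
  (forall e : R, is_idempotent e -> sigma e = e) /\ abelian_ring R.
Proof.
split; first exact: sigma_idempotent_fixed.
exact: idempotent_central Hrev.
Qed.
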